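(* Consider a controlled Markov chain with finite state space $X$, finite action set $U$, unknown transition probabilities $p$ and rewards $r(x,u)\in(0,1]$, controlled by the RBMLE algorithm described in the context, with parameters $a>0$, $b>2$. Let $\mathcal{G}_1:=\{\omega: p\in\mathcal{C}(t)\ \forall t\in\mathbb{N}\}$. Then on $\mathcal{G}_1$, for every optimal policy $\pi^{\star}\in\Pi^{\star}(p)$, \[ I_k(\pi^{\star})\ge\alpha(\tau_k)(1-\gamma)J^{\star}(p)\quad\forall k=1,2,\dots,K, \] where $\gamma:=\frac{|X|^3|U|}{2a\,p_{\min}J^{\star}(p)}$ and $K$ is the number of episodes considered.
   Context: $\Pi_{sd}$: stationary deterministic policies $X\to U$. $J(\theta,\pi)$: long-term average reward under transition kernel $\theta$ and policy $\pi$; $J^{\star}(\theta)=\max_{\pi\in\Pi_{sd}}J(\theta,\pi)$; $\Pi^{\star}(p)=\arg\max_{\pi\in\Pi_{sd}}J(p,\pi)$. Known information: the zero pattern of $p$ and $p_{\min}:=\min_{(x,y,u):p(x,y,u)>0}p(x,y,u)$. $\Theta$: all $\theta\in[0,1]^{|X|\times|X|\times|U|}$ with $\theta(x,y,u)=0$ whenever $p(x,y,u)=0$ and $\sum_y\theta(x,y,u)=1$; $\theta(x,u)=\{\theta(x,y,u)\}_y$. $KL(p_1,p_2)=\sum_xp_1(x)\log\frac{p_1(x)}{p_2(x)}$. $n(x,u;t)$: number of times action $u$ was applied in state $x$ up to time $t$; $n(x,y,u;t)$: number of those followed by a move to $y$; $\hat p(x,y,u;t)=\frac{n(x,y,u;t)}{n(x,u;t)\vee1}$.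 $d_1(x,u;t)=\sqrt{\log(t^b|X|^2|U|)/n(x,u;t)}$ and $\mathcal{C}(t)=\{\theta\in\Theta:|\theta(x,y,u)-\hat p(x,y,u;t)|\le d_1(x,u;t)\ \forall(x,y,u)\}$. Episodes $\mathcal{E}_k=[\tau_k,\tau_{k+1}-1]$, $|\mathcal{E}_k|=2^k$; $n_k=n(\cdot;\tau_k)$, $\hat p_k=\hat p(\tau_k)$; $\alpha(t)=a\log(t^b|X|^2|U|)$. Index: $I_k(\pi)=\max_{\theta\in\Theta}\{\alpha(\tau_k)J(\theta,\pi)-\sum_{(x,u)}n_k(x,u)KL(\hat p_k(x,u),\theta(x,u))\}$; RBMLE applies $\pi_k\in\arg\max_{\pi\in\Pi_{sd}}I_k(\pi)$ during episode $k$. *)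

From HB Require Import structures.
From mathcomp Require Import all_boot all_order all_algebra.
From mathcomp Require Import all_classical all_reals all_analysis.
Set Implicit Arguments. Unset Strict Implicit. Unset Printing Implicit Defensive.
Import Order.TTheory GRing.Theory Num.Theory.
Local Open Scope ring_scope.
Local Open Scope classical_set_scope.

Section RBMLE.
Variables (R : realType) (X U : finType).

(* transition kernels theta(x,y,u) = prob. of moving x -> y under action u *)
Definition tkernel := X -> X -> U -> R.
Definition policy := {ffun X -> U}.

Fixpoint state_dist (theta : tkernel) (pi : policy) (x0 : X) (t : nat) : X -> R :=
  match t with
  | 0 => fun y => if y == x0 then 1 else 0
  | t'.+1 => fun y => \sum_(z : X) state_dist theta pi x0 t' z * theta z y (pi z)
  end.

Definition avg_reward (r : X -> U -> R) (x0 : X) (theta : tkernel) (pi : policy) : R :=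
  limn_inf (fun T : nat => (T.+1%:R)^-1 *
    \sum_(t < T.+1) \sum_(y : X) state_dist theta pi x0 t y * r y (pi y)).

Definition opt_reward (r : X -> U -> R) (x0 : X) (theta : tkernel) : R :=
  \big[Num.max/0]_(pi : policy) avg_reward r x0 theta pi.

Definition is_optimal (r : X -> U -> R) (x0 : X) (theta : tkernel) (pi : policy) : Prop :=
  forall pi' : policy, avg_reward r x0 theta pi' <= avg_reward r x0 theta pi.

Definition is_kernel (p : tkernel) : Prop :=
  (forall x y u, 0 <= p x y u) /\ (forall x u, \sum_(y : X) p x y u = 1).

Definition pmin (p : tkernel) : R :=
  \big[Num.min/1]_(i : X * X * U | 0 < p i.1.1 i.1.2 i.2) p i.1.1 i.1.2 i.2.

Definition Theta (p : tkernel) : set tkernel :=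
  [set theta | (forall x y u, 0 <= theta x y u <= 1) /\
               (forall x y u, p x y u = 0 -> theta x y u = 0) /\
               (forall x u, \sum_(y : X) theta x y u = 1)].

(* Counts along a trajectory (xs t, us t), t = 1, 2, ...; observations
   available at time t are the transitions (xs s, us s, xs s.+1), 1 <= s < t. *)
Definition cnt (xs : nat -> X) (us : nat -> U) (x : X) (u : U) (t : nat) : nat :=
  (\sum_(1 <= s < t) ((xs s == x) && (us s == u)))%N.

Definition cnt3 (xs : nat -> X) (us : nat -> U) (x y : X) (u : U) (t : nat) : nat :=
  (\sum_(1 <= s < t) [&& xs s == x, us s == u & xs s.+1 == y])%N.

Definition phat (xs : nat -> X) (us : nat -> U) (t : nat) : tkernel :=
  fun x y u => (cnt3 xs us x y u t)%:R / (maxn (cnt xs us x u t) 1)%:R.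

Definition logterm (b : R) (t : nat) : R :=
  ln ((t%:R) `^ b * (#|X| ^ 2 * #|U|)%N%:R).

(* d_1(x,u;t) = sqrt(log(t^b|X|^2|U|)/n(x,u;t)), +infinity when n = 0 *)
Definition conf_set (b : R) (xs : nat -> X) (us : nat -> U) (t : nat) (p : tkernel)
  : set tkernel :=
  [set theta | theta \in Theta p /\
     forall x y u, cnt xs us x u t = 0%N \/
       `|theta x y u - phat xs us t x y u|
          <= Num.sqrt (logterm b t / (cnt xs us x u t)%:R)].

(* episodes: tau_1 = 1, |E_k| = 2^k, so tau_k = 2^k - 1 *)
Definition tau (k : nat) : nat := (2 ^ k - 1)%N.

Definition alpha (a b : R) (t : nat) : R := a * logterm b t.

Definition KL (p1 p2 : X -> R) : \bar R :=
  (\sum_(y : X) (if p1 y == 0%R then 0%E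
                 else if p2 y == 0%R then +oo%E
                 else (p1 y * ln (p1 y / p2 y))%:E))%E.

Definition rbmle_index (r : X -> U -> R) (x0 : X) (a b : R) (p : tkernel)
  (xs : nat -> X) (us : nat -> U) (k : nat) (pi : policy) : \bar R :=
  ereal_sup ((fun theta : tkernel =>
     ((alpha a b (tau k) * avg_reward r x0 theta pi)%:E -
      \sum_(x : X) \sum_(u : U)
        ((cnt xs us x u (tau k))%:R%:E *
         KL (fun y => phat xs us (tau k) x y u) (fun y => theta x y u)))%E)
     @` Theta p).

End RBMLE.

(* On G_1 the true kernel p is admissible in the maximisation defining I_k,
   so I_k(pistar) >= alpha(tau_k) J*(p) - sum_(x,u) n_k(x,u) KL(phat_k(x,u), p(x,u)).
   Since ln z <= z - 1, each KL term is at most the chi-square divergence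
   sum_y (phat_k - p)^2 / p; on G_1 every numerator is at most
   log(tau_k^b |X|^2 |U|) / n_k(x,u) and every nonzero denominator is at least
   p_min.  Hence n_k(x,u) KL(...) <= |X| log(...) / p_min <= |X|^2 log(...) / (2 p_min)
   (for |X| = 1 both rows are the same point mass), and summing over the |X||U|
   pairs yields exactly the deficit gamma alpha(tau_k) J*(p). *)

From HB Require Import structures.
From mathcomp Require Import all_boot all_order all_algebra.
From mathcomp Require Import all_classical all_reals all_analysis.
From mathcomp Require Import ring lra.
Import Order.TTheory GRing.Theory Num.Theory.
Local Open Scope ring_scope.
Local Open Scope classical_set_scope.
Set Implicit Arguments. Unset Strict Implicit. Unset Printing Implicit Defensive.

Section Averages.
Variable R : realType.

Lemma convex_comb_in_bounds (I : finType) (w f : I -> R) (c M : R) :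
  (forall i, 0 <= w i) -> \sum_i w i = 1 -> (forall i, c <= f i <= M) ->
  c <= \sum_i w i * f i <= M.
Proof.
move=> w_ge0 w_sum1 f_bnd; apply/andP; split.
  rewrite -[c]mul1r -w_sum1 mulr_suml; apply: ler_sum => i _.
  by rewrite ler_wpM2l // (andP (f_bnd i)).1.
rewrite -[M]mul1r -w_sum1 mulr_suml; apply: ler_sum => i _.
by rewrite ler_wpM2l // (andP (f_bnd i)).2.
Qed.

Lemma mean_in_bounds (n : nat) (f : 'I_n.+1 -> R) (c M : R) :
  (forall i, c <= f i <= M) -> c <= n.+1%:R^-1 * \sum_i f i <= M.
Proof.
move=> f_bnd; rewrite mulr_sumr; apply: convex_comb_in_bounds => //.
by rewrite sumr_const card_ord -[_ *+ _]mulr_natr mulVf ?pnatr_eq0.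
Qed.

Lemma limn_inf_ge (u : R^nat) (c M : R) :
  (forall n, c <= u n <= M) -> c <= limn_inf u.
Proof.
move=> u_bnd.
have u_bounded : bounded_fun u.
  rewrite /bounded_near; near=> K => n _ /=.
  apply: (@le_trans _ _ (`|c| + `|M|)); last by near: K; exact: nbhs_pinfty_ge.
  have /andP[cu uM] := u_bnd n.
  have cc : - `|c| <= c by rewrite lerNl -normrN ler_norm.
  have MM : M <= `|M| := ler_norm M.
  have := normr_ge0 c; have := normr_ge0 M.
  rewrite ler_norml => *; apply/andP; split; lra.
rewrite limn_infE //; apply: (@le_trans _ _ (infs u 0%N)).
  apply: lb_le_inf; first by exists (u 0%N), 0%N.
  by move=> _ [n _ <-]; exact: (andP (u_bnd n)).1.
apply: ub_le_sup; first exact: bounded_fun_has_ubound_infs.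
by exists 0%N.
Unshelve. all: by end_near.
Qed.

End Averages.

Section MarkovChain.
Variables (R : realType) (X U : finType).
Implicit Types (p : tkernel R X U) (pi : policy X U) (r : X -> U -> R).

Lemma state_dist_ge0 p pi x0 t y : is_kernel p -> 0 <= state_dist p pi x0 t y.
Proof.
move=> [p0 _]; elim: t y => [|t IH] y /=; first by case: ifP.
by apply: sumr_ge0 => z _; apply: mulr_ge0.
Qed.

Lemma sum_state_dist p pi x0 t : is_kernel p -> \sum_y state_dist p pi x0 t y = 1.
Proof.
move=> [_ p1]; elim: t => [|t IH] /=.
  by rewrite (bigD1 x0) //= eqxx big1 ?addr0 // => y /negbTE ->.
rewrite exchange_big /= -[RHS]IH; apply: eq_bigr => z _.
by rewrite -mulr_sumr p1 mulr1.
Qed.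

Lemma avg_reward_ge p r x0 pi (c M : R) : is_kernel p ->
  (forall x u, c <= r x u <= M) -> c <= avg_reward r x0 p pi.
Proof.
move=> p_kernel r_bnd; apply: (@limn_inf_ge _ _ c M) => T.
apply: mean_in_bounds => t; apply: convex_comb_in_bounds => [y||y].
- exact: state_dist_ge0.
- exact: sum_state_dist.
- exact: r_bnd.
Qed.

Lemma avg_reward_gt0 p r x0 pi : is_kernel p ->
  (forall x u, 0 < r x u <= 1) -> 0 < avg_reward r x0 p pi.
Proof.
move=> p_kernel r_bnd; set c := \big[Num.min/1]_(i : X * U) r i.1 i.2.
have c_gt0 : 0 < c.
  apply: (big_ind (fun v => 0 < v)) => // [v w v0 w0|i _].
    by rewrite lt_min v0 w0.
  by case/andP: (r_bnd i.1 i.2).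
apply: (lt_le_trans c_gt0); apply: (@avg_reward_ge p r x0 pi c 1 p_kernel) => x u.
rewrite (andP (r_bnd x u)).2 andbT.
exact: (@bigmin_le _ _ _ _ (x, u) (fun i => r i.1 i.2)).
Qed.

Lemma opt_reward_optimal p r x0 pi : is_optimal r x0 p pi ->
  0 <= avg_reward r x0 p pi -> opt_reward r x0 p = avg_reward r x0 p pi.
Proof.
move=> pi_opt J_ge0; apply/eqP; rewrite eq_le; apply/andP; split.
  by apply: bigmax_le => // pi' _; exact: pi_opt.
exact: (@le_bigmax _ _ _ _ (fun pi' => avg_reward r x0 p pi') pi).
Qed.

Lemma pmin_gt0 p : 0 < pmin p.
Proof.
apply: (big_ind (fun v => 0 < v)) => // v w v0 w0.
by rewrite lt_min v0 w0.
Qed.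

Lemma pmin_le p x y u : 0 < p x y u -> pmin p <= p x y u.
Proof.
exact: (@bigmin_le_cond _ _ _ _ (x, y, u) (fun i => 0 < p i.1.1 i.1.2 i.2)
  (fun i => p i.1.1 i.1.2 i.2)).
Qed.

End MarkovChain.

Section Divergences.
Variables (R : realType) (X : finType).
Implicit Types (q p : X -> R).

Definition KLr q p : R := \sum_y (if q y == 0 then 0 else q y * ln (q y / p y)).

(* Terms with [p y = 0] vanish, since [x / 0 = 0]. *)
Definition chi2 q p : R := \sum_y (q y - p y) ^+ 2 / p y.

Lemma KL_EFin q p : (forall y, q y != 0 -> p y != 0) -> KL q p = (KLr q p)%:E.
Proof.
move=> qp; rewrite /KL /KLr -sumEFin; apply: eq_bigr => y _.
by case: ifP => // /negbT /qp /negbTE ->.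
Qed.

Lemma KLr_le_chi2 q p : (forall y, 0 <= q y) -> (forall y, q y != 0 -> 0 < p y) ->
  \sum_y q y = 1 -> \sum_y p y = 1 -> KLr q p <= chi2 q p.
Proof.
move=> q0 qp q1 p1.
(* termwise, [q ln (q / p) <= q (q / p - 1) = (q - p)^2 / p + (q - p)], and the
   added terms [q - p] sum to [0] *)
have -> : chi2 q p = \sum_y ((q y - p y) ^+ 2 / p y + (q y - p y)).
  by rewrite big_split /= sumrB q1 p1 subrr addr0.
apply: ler_sum => y _.
have [->|qy_neq0] := eqVneq (q y) 0.
  rewrite sub0r sqrrN.
  have [->|py_neq0] := eqVneq (p y) 0; first by rewrite expr0n /= mul0r subr0.
  by rewrite expr2 mulfK // subrr.
have py_gt0 := qp y qy_neq0.
have qy_gt0 : 0 < q y by rewrite lt_def qy_neq0 q0.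
have ln_le : ln (q y / p y) <= q y / p y - 1.
  have := @le_ln1Dx R (q y / p y - 1); rewrite addrCA subrr addr0; apply.
  by rewrite ltrBrDl subrr divr_gt0.
apply: le_trans (ler_wpM2l (ltW qy_gt0) ln_le) _.
by rewrite le_eqVlt; apply/orP; left; apply/eqP; field; rewrite gt_eqF.
Qed.

Lemma chi2_le q p (m d : R) : 0 < m -> (forall y, 0 <= p y) ->
  (forall y, p y = 0 -> q y = 0) -> (forall y, 0 < p y -> m <= p y) ->
  (forall y, (q y - p y) ^+ 2 <= d) -> chi2 q p <= #|X|%:R * (d / m).
Proof.
move=> m_gt0 p0 pq pm qpd; rewrite mulr_natl -sumr_const.
apply: ler_sum => y _; have [py_gt0|] := ltP 0 (p y).
  apply: le_trans (ler_wpM2r _ (qpd y)) _; first by rewrite invr_ge0 ltW.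
  by rewrite ler_wpM2l ?lef_pV2 ?posrE ?pm // (le_trans _ (qpd y)) ?sqr_ge0.
move=> py_le0; have py0 : p y = 0 by apply/eqP; rewrite eq_le py_le0 p0.
rewrite py0 pq // subrr expr0n /= mul0r divr_ge0 ?(ltW m_gt0) //.
by apply: le_trans (qpd y); rewrite sqr_ge0.
Qed.

Lemma chi2_card1 q p : #|X| = 1%N -> \sum_y q y = 1 -> \sum_y p y = 1 ->
  chi2 q p = 0.
Proof.
move=> /fintype1[y0 all_y0] q1 p1.
have sum1 (f : X -> R) : \sum_y f y = f y0.
  by rewrite (bigD1 y0) //= big1 ?addr0 // => y; rewrite (all_y0 y) eqxx.
move: q1 p1; rewrite /chi2 !sum1 => -> ->.
by rewrite subrr expr0n /= mul0r.
Qed.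

End Divergences.

Section EmpiricalKernel.
Variables (R : realType) (X U : finType) (xs : nat -> X) (us : nat -> U).

Lemma sum_cnt3 x u t : (\sum_y cnt3 xs us x y u t)%N = cnt xs us x u t.
Proof.
rewrite /cnt3 /cnt exchange_big /=; apply: eq_bigr => s _.
have [/andP[/eqP <- /eqP <-]|xus] := boolP ((xs s == x) && (us s == u)).
  rewrite (bigD1 (xs s.+1)) //= !eqxx big1 // => y.
  by rewrite eq_sym => /negbTE ->.
by rewrite big1 // => y; rewrite andbA (negbTE xus).
Qed.

Lemma phat_ge0 t x y u : 0 <= phat R xs us t x y u.
Proof. by rewrite divr_ge0. Qed.

Lemma sum_phat t x u : (0 < cnt xs us x u t)%N -> \sum_y phat R xs us t x y u = 1.
Proof.
move=> n_gt0; rewrite /phat -mulr_suml -natr_sum sum_cnt3 (maxn_idPl n_gt0).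
by rewrite mulfV // pnatr_eq0 -lt0n.
Qed.

Variable p : tkernel R X U.
Hypothesis traj_supp : forall t, (1 <= t)%N -> 0 < p (xs t) (xs t.+1) (us t).

Lemma phat_supp t x y u : phat R xs us t x y u != 0 -> 0 < p x y u.
Proof.
rewrite /phat; have [->|] := eqVneq (cnt3 xs us x y u t) 0%N.
  by rewrite mul0r eqxx.
move=> + _; apply: contraNT; rewrite -leNgt => p_le0; apply/eqP.
rewrite /cnt3 big_nat_cond big1 // => s /andP[/andP[s_ge1 _] _].
apply/eqP; rewrite eqb0; apply/negP => /and3P[/eqP ex /eqP eu /eqP ey].
by move: p_le0; rewrite -ex -eu -ey leNgt traj_supp.
Qed.

End EmpiricalKernel.

Section Confidence.
Variables (R : realType) (X U : finType) (xs : nat -> X) (us : nat -> U).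
Variables (p : tkernel R X U) (b : R) (t : nat).

Lemma logterm_ge0 : 0 <= b -> (1 <= t)%N -> (0 < #|X|)%N -> (0 < #|U|)%N ->
  0 <= logterm X U b t.
Proof.
move=> b_ge0 t_ge1 X_gt0 U_gt0; apply: ln_ge0.
have tb_ge1 : 1 <= t%:R `^ b.
  by rewrite -[leLHS](powRr0 t%:R) (@ler_powR _ t%:R) ?ler1n.
have N_ge1 : 1 <= (#|X| ^ 2 * #|U|)%N%:R :> R.
  by rewrite ler1n muln_gt0 expn_gt0 X_gt0 U_gt0.
by apply: le_trans (ler_pM ler01 ler01 tb_ge1 N_ge1); rewrite mulr1.
Qed.

Hypothesis p_conf : p \in conf_set b xs us t p.

Lemma conf_set_Theta : p \in Theta p.
Proof. by case/set_mem: p_conf. Qed.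

Lemma conf_set_sqr_le x y u : 0 <= logterm X U b t -> (0 < cnt xs us x u t)%N ->
  (phat R xs us t x y u - p x y u) ^+ 2 <= logterm X U b t / (cnt xs us x u t)%:R.
Proof.
move=> L_ge0 n_gt0; move: p_conf; rewrite in_setE => -[_ /(_ x y u)].
case=> [n0|]; first by rewrite n0 in n_gt0.
by rewrite distrC -sqrtr_sqr ler_sqrt // divr_ge0.
Qed.

Hypothesis p_kernel : is_kernel p.
Hypothesis traj_supp : forall s, (1 <= s)%N -> 0 < p (xs s) (xs s.+1) (us s).

Lemma weighted_KLr_le x u : 0 <= logterm X U b t ->
  (cnt xs us x u t)%:R * KLr (fun y => phat R xs us t x y u) (fun y => p x y u)
    <= #|X|%:R ^+ 2 * logterm X U b t / (2 * pmin p).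
Proof.
set q := fun y => _; set n := cnt _ _ _ _ _; set L := logterm _ _ _ _ => L_ge0.
have pmin_pos := pmin_gt0 p.
have rhs_ge0 : 0 <= #|X|%:R ^+ 2 * L / (2 * pmin p).
  by rewrite divr_ge0 ?mulr_ge0 ?exprn_ge0 // ltW.
have [->|n_gt0] := posnP n; first by rewrite mul0r.
have [p_ge0 p_sum1] := p_kernel.
have KL_le_chi2 : KLr q (fun y => p x y u) <= chi2 q (fun y => p x y u).
  apply: KLr_le_chi2 => [y|y||]; [exact: phat_ge0|exact: phat_supp|exact: sum_phat|].
  exact: p_sum1.
(* the factor [|X| <= |X|^2 / 2] needs [2 <= |X|] *)
have [X_le1|X_gt1] := leqP #|X| 1.
  have X1 : #|X| = 1%N by apply/eqP; rewrite eqn_leq X_le1; apply/card_gt0P; exists x.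
  rewrite chi2_card1 ?sum_phat ?p_sum1 // in KL_le_chi2.
  by apply: le_trans rhs_ge0; rewrite mulr_ge0_le0.
have chi2_le_card : chi2 q (fun y => p x y u) <= #|X|%:R * (L / n%:R / pmin p).
  apply: chi2_le => // [y py0|y|y]; last exact: conf_set_sqr_le.
  - have [//|/(phat_supp traj_supp)] := eqVneq (q y) 0.
    by rewrite py0 ltxx.
  - exact: pmin_le.
apply: le_trans (ler_wpM2l (ler0n _ _) (le_trans KL_le_chi2 chi2_le_card)) _.
have -> : n%:R * (#|X|%:R * (L / n%:R / pmin p)) = #|X|%:R * L / pmin p.
  by field; rewrite !gt_eqF // ltr0n.
have -> : #|X|%:R ^+ 2 * L / (2 * pmin p) = (#|X|%:R * L / pmin p) * (#|X|%:R / 2).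
  by field; rewrite gt_eqF.
rewrite -[leLHS]mulr1 ler_wpM2l ?divr_ge0 ?mulr_ge0 ?(ltW pmin_pos) //.
by rewrite ler_pdivlMr // mul1r ler_nat.
Qed.

Lemma weighted_KL_sum_le : 0 <= logterm X U b t ->
  (\sum_x \sum_u (cnt xs us x u t)%:R%:E *
     KL (fun y => phat R xs us t x y u) (fun y => p x y u) <=
   ((#|X| ^ 3 * #|U|)%N%:R * logterm X U b t / (2 * pmin p))%:E)%E.
Proof.
move=> L_ge0.
have -> : (\sum_x \sum_u (cnt xs us x u t)%:R%:E *
    KL (fun y => phat R xs us t x y u) (fun y => p x y u))%E =
  (\sum_x \sum_u (cnt xs us x u t)%:R *
    KLr (fun y => phat R xs us t x y u) (fun y => p x y u))%:E.
  rewrite -sumEFin; apply: eq_bigr => x _; rewrite -sumEFin; apply: eq_bigr => u _.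
  by rewrite KL_EFin ?EFinM // => y /(phat_supp traj_supp) /lt0r_neq0.
rewrite lee_fin.
apply: (@le_trans _ _ (\sum_(x : X) \sum_(u : U)
  #|X|%:R ^+ 2 * logterm X U b t / (2 * pmin p))).
  by do 2 (apply: ler_sum => ? _); exact: weighted_KLr_le.
have sum_const (T : finType) (c : R) : \sum_(i : T) c = c * #|T|%:R.
  by rewrite sumr_const mulr_natr.
rewrite !sum_const natrM natrX le_eqVlt; apply/orP; left.
by apply/eqP; ring.
Qed.

End Confidence.

Lemma tau_ge1 k : (1 <= k)%N -> (1 <= tau k)%N.
Proof. by move=> k_ge1; rewrite /tau subn_gt0 -{1}(expn0 2) ltn_exp2l. Qed.

Lemma rbmle_index_ge (R : realType) (X U : finType) (r : X -> U -> R) (x0 : X) (a b : R)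
    (p : tkernel R X U) (xs : nat -> X) (us : nat -> U) (k : nat) (pi : policy X U)
    (theta : tkernel R X U) :
  theta \in Theta p ->
  ((alpha X U a b (tau k) * avg_reward r x0 theta pi)%:E -
   \sum_x \sum_u (cnt xs us x u (tau k))%:R%:E *
     KL (fun y => phat R xs us (tau k) x y u) (fun y => theta x y u) <=
   rbmle_index r x0 a b p xs us k pi)%E.
Proof. by move=> /set_mem theta_in; apply: ereal_sup_ubound; exists theta. Qed.

Theorem lemma3 (R : realType) (X U : finType) (p : tkernel R X U)
  (r : X -> U -> R) (a b : R) (x0 : X) (xs : nat -> X) (us : nat -> U) :
  is_kernel p ->
  (forall x u, 0 < r x u <= 1) ->
  0 < a -> 2 < b ->
  (* the trajectory starts at x0 and only makes transitions of positive probability *)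
  xs 1%N = x0 ->
  (forall t : nat, (1 <= t)%N -> 0 < p (xs t) (xs t.+1) (us t)) ->
  (* actions are chosen by RBMLE: during episode k, u_t = pi_k(x_t), pi_k in argmax I_k *)
  (forall k : nat, (1 <= k)%N -> exists pik : policy X U,
      (forall pi : policy X U, (rbmle_index r x0 a b p xs us k pi <= rbmle_index r x0 a b p xs us k pik)%E)
      /\ forall t : nat, (tau k <= t < tau k.+1)%N -> us t = pik (xs t)) ->
  (* the event G_1 *)
  (forall t : nat, p \in conf_set b xs us t p) ->
  forall pistar : policy X U, is_optimal r x0 p pistar ->
  forall k : nat, (1 <= k)%N ->
    ((alpha X U a b (tau k) *
      (1 - (#|X| ^ 3 * #|U|)%N%:R / (2 * a * pmin p * opt_reward r x0 p))
      * opt_reward r x0 p)%:E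
     <= rbmle_index r x0 a b p xs us k pistar)%E.
Proof.
move=> p_kernel r_bnd a_gt0 b_gt2 _ traj_supp _ G1 pistar pistar_opt k k_ge1.
have J_gt0 := avg_reward_gt0 x0 pistar p_kernel r_bnd.
rewrite (opt_reward_optimal pistar_opt (ltW J_gt0)).
have L_ge0 : 0 <= logterm X U b (tau k).
  apply: logterm_ge0 (tau_ge1 k_ge1) _ _; first lra.
    by apply/card_gt0P; exists x0.
  by apply/card_gt0P; exists (pistar x0).
apply: le_trans (rbmle_index_ge r x0 a b xs us k pistar (conf_set_Theta (G1 (tau k)))).
apply: le_trans (leeB (lexx _) (weighted_KL_sum_le (G1 (tau k)) p_kernel traj_supp L_ge0)).
rewrite -EFinB lee_fin /alpha le_eqVlt; apply/orP; left; apply/eqP.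
by field; rewrite !lt0r_neq0 ?pmin_gt0.
Qed.
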